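(* Let $(q_k,p_{k1},p_{k2})_{k\ge2}$ be real numbers with $q_k>0$, $p_{k1}\ge0$, $p_{k2}>0$ and $q_k+p_{k1}+p_{k2}=1$ for all $k\ge2$, and let $Y$ be the (1,2) random walk defined in the context. For $1\le m<k<n$, $$Q_k^n(m,n)=\sum_{s=m+1}^k\mathbf e_1A_s\cdots A_{n-1}\left(\frac{1+\sum_{s=m+1}^{n-1}\mathbf e_1A_s\cdots A_{n-1}\mathbf e_2^t}{1+\sum_{s=m+1}^{n-1}\mathbf e_1A_s\cdots A_{n-1}\mathbf e_1^t}\mathbf e_1^t-\mathbf e_2^t\right),$$ $$Q_k^{n+1}(m,n)=\sum_{s=m+1}^k\mathbf e_1A_s\cdots A_{n-1}\left(\mathbf e_2^t-\frac{\sum_{s=m+1}^{n-1}\mathbf e_1A_s\cdots A_{n-1}\mathbf e_2^t}{1+\sum_{s=m+1}^{n-1}\mathbf e_1A_s\cdots A_{n-1}\mathbf e_1^t}\mathbf e_1^t\right),$$ $$Q_k(m,n,+)=\frac{\sum_{s=m+1}^k\mathbf e_1A_s\cdots A_{n-1}\mathbf e_1^t}{1+\sum_{s=m+1}^{n-1}\mathbf e_1A_s\cdots A_{n-1}\mathbf e_1^t}.$$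
   Context: The (1,2) random walk $Y$ is the Markov chain on $\mathbb Z_+=\{0,1,2,\dots\}$ with $P(Y_{k+1}=0\mid Y_k=1)=P(Y_{k+1}=2\mid Y_k=0)=1$ and, for $n\ge2$, $P(Y_{k+1}=n-1\mid Y_k=n)=q_n$, $P(Y_{k+1}=n+1\mid Y_k=n)=p_{n1}$, $P(Y_{k+1}=n+2\mid Y_k=n)=p_{n2}$. For $k\ge2$, $a_k=(p_{k1}+p_{k2})/q_k$, $b_k=p_{k2}/q_k$, $A_k=\begin{pmatrix}a_k&b_k\\1&0\end{pmatrix}$; $\mathbf e_1=(1,0)$, $\mathbf e_2=(0,1)$, $^t$ denotes transpose. For $m\le k\le n+1$ and $j\in\{n,n+1\}$, $Q_k^j(m,n)$ is the probability, for $Y$ started at $Y_0=k$, that $Y$ hits $[n,\infty)$ before hitting $[0,m]$ and first enters $[n,\infty)$ at the site $j$; $Q_k(m,n,+)=Q_k^n(m,n)+Q_k^{n+1}(m,n)$ is the probability, starting from $k$, that $Y$ hits $[n,\infty)$ before $[0,m]$. *)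

From HB Require Import structures.
From mathcomp Require Import all_boot all_order all_algebra.
From mathcomp Require Import all_classical all_reals all_analysis.
Set Implicit Arguments. Unset Strict Implicit. Unset Printing Implicit Defensive.
Import Order.TTheory GRing.Theory Num.Theory numFieldNormedType.Exports.
Local Open Scope ring_scope.

Section Walk.
Variable R : realType.
Variables (q p1 p2 : nat -> R).

Definition trans (x y : nat) : R :=
  if x == 0%N then (y == 2%N)%:R
  else if x == 1%N then (y == 0%N)%:R
  else if y == x.-1 then q x
  else if y == x.+1 then p1 x
  else if y == x.+2 then p2 x
  else 0.

(* exitP m n j t x = probability, starting from x, that the walk stays in
   the open interval (m,n) at times 0..t-1 and is at site j at time t.
   For j in {n, n+1} this is the probability that the walk first enters
   [n,oo) at time t, at site j, without having hit [0,m] before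
   (all states reachable in one step from (m,n) are < n+2). *)
Fixpoint exitP (m n j t x : nat) : R :=
  match t with
  | 0%N => (x == j)%:R
  | t'.+1 => if (m < x < n)%N
             then \sum_(y < n.+2) trans x y * exitP m n j t' y
             else 0
  end.

(* Q_k^j(m,n): sum over the (disjoint) exit times t *)
Definition Qhit (m n j k : nat) : R :=
  limn (series (fun t => exitP m n j t k)).

Definition Qplus (m n k : nat) : R := Qhit m n n k + Qhit m n n.+1 k.

Definition a_ (k : nat) : R := (p1 k + p2 k) / q k.
Definition b_ (k : nat) : R := p2 k / q k.
Definition A_ (k : nat) : 'M[R]_2 :=
  \matrix_(i < 2, j < 2)
    (if (i == 0) && (j == 0) then a_ k
     else if (i == 0) && (j == 1) then b_ k
     else if (i == 1) && (j == 0) then 1 else 0).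

Definition Aprod (s n : nat) : 'M[R]_2 := \prod_(s <= i < n) A_ i.

End Walk.

Definition e1 {R : realType} : 'rV[R]_2 := delta_mx 0 0.
Definition e2 {R : realType} : 'rV[R]_2 := delta_mx 0 1.

Definition e1Mv {R : realType} (M : 'M[R]_2) (v : 'rV[R]_2) : R :=
  (e1 *m M *m v^T) 0 0.

From HB Require Import structures.
From mathcomp Require Import all_boot all_order all_algebra.
From mathcomp Require Import all_classical all_reals all_analysis.
From mathcomp Require Import ring lra zify.
Import Order.TTheory GRing.Theory Num.Theory numFieldNormedType.Exports.
Local Open Scope ring_scope.

(* Each Qhit, and hence Qplus, is the limit of the nondecreasing partial sums
   of its exit-time series, bounded by 1; passing to the limit in the one-step
   recursion shows that it is harmonic for the walk on (m, n), with boundary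
   values 0 at m and 0 or 1 at n and n + 1.  For a harmonic h the increments
   u_s = h s - h (s - 1) satisfy (u_s, u_(s+1))^t = A_s (u_(s+1), u_(s+2))^t,
   hence (u_s, u_(s+1))^t = A_s ... A_(n-1) (u_n, u_(n+1))^t, and summing u_s
   over m < s <= k expresses h k through (u_n, u_(n+1)).  Here u_(n+1) is a
   boundary datum, and u_n is recovered by evaluating the sum at k = n - 1,
   which is where the factor 1 + S1 (positive, as the A_s are nonnegative)
   comes from. *)

Lemma sum_indicator {R : nmodType} N z (F : nat -> R) : (z < N)%N ->
  \sum_(y < N) F y *+ ((y : nat) == z) = F z.
Proof.
move=> ltzN; rewrite (eq_bigr (fun y : 'I_N => if (y : nat) == z then F y else 0)).
  by rewrite -big_mkcond big_ord1_eq ltzN.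
by move=> y _; rewrite mulrb.
Qed.

Lemma mulmx_ge0 (R : numDomainType) p k r (A : 'M[R]_(p, k)) (B : 'M[R]_(k, r)) :
  (forall i j, 0 <= A i j) -> (forall i j, 0 <= B i j) ->
  forall i j, 0 <= (A *m B) i j.
Proof.
by move=> A_ge0 B_ge0 i j; rewrite mxE sumr_ge0 // => l _; rewrite mulr_ge0.
Qed.

Section OneTwoWalk.
Context {R : realType} (q p1 p2 : nat -> R).
Hypothesis hq : forall k, (2 <= k)%N -> 0 < q k.
Hypothesis hp1 : forall k, (2 <= k)%N -> 0 <= p1 k.
Hypothesis hp2 : forall k, (2 <= k)%N -> 0 < p2 k.
Hypothesis hsum : forall k, (2 <= k)%N -> q k + p1 k + p2 k = 1.

Definition harmonic_on (m n : nat) (h : nat -> R) :=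
  forall x, (m < x < n)%N -> h x = q x * h x.-1 + p1 x * h x.+1 + p2 x * h x.+2.

Lemma harmonic_onD m n f g :
  harmonic_on m n f -> harmonic_on m n g -> harmonic_on m n (f \+ g).
Proof. by move=> f_harm g_harm x x_in; rewrite /= f_harm // g_harm //; ring. Qed.

Lemma trans_ge0 x y : 0 <= trans q p1 p2 x y.
Proof.
rewrite /trans; case: ifP => [_|/negbT x_neq0]; first exact: ler0n.
case: ifP => [_|/negbT x_neq1]; first exact: ler0n.
have x_ge2 : (2 <= x)%N by lia.
by move: (hq x x_ge2) (hp1 x x_ge2) (hp2 x x_ge2); repeat case: ifP => _; lra.
Qed.

Lemma transE x y : (2 <= x)%N ->
  trans q p1 p2 x y = q x *+ (y == x.-1) + p1 x *+ (y == x.+1) + p2 x *+ (y == x.+2).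
Proof.
case: x => [|[|x]] // _; rewrite /trans /=.
have [->|_] := eqVneq y x.+1; first by rewrite !ltn_eqF ?addr0 //; lia.
have [->|_] := eqVneq y x.+3; first by rewrite ltn_eqF ?addr0 ?add0r //; lia.
by case: eqVneq; rewrite ?add0r.
Qed.

Lemma sum_trans n x (f : nat -> R) : (2 <= x)%N -> (x < n)%N ->
  \sum_(y < n.+2) trans q p1 p2 x y * f y =
  q x * f x.-1 + p1 x * f x.+1 + p2 x * f x.+2.
Proof.
move=> x_ge2 ltxn.
under eq_bigr do rewrite transE // !mulrDl !mulrnAl.
by rewrite !big_split /= !(sum_indicator _ _ (fun y => _ * f y)) //; lia.
Qed.

Lemma exitP_ge0 m n j t x : 0 <= exitP q p1 p2 m n j t x.
Proof.
elim: t x => [|t IH] x /=; first exact: ler0n.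
by case: ifP => _ //; apply: sumr_ge0 => y _; rewrite mulr_ge0 ?trans_ge0.
Qed.

Definition exit_within m n j T x : R := series (fun t => exitP q p1 p2 m n j t x) T.

Lemma exit_withinS m n j T x : exit_within m n j T.+1 x =
  (x == j)%:R + if (m < x < n)%N
                then \sum_(y < n.+2) trans q p1 p2 x y * exit_within m n j T y else 0.
Proof.
rewrite /exit_within !seriesEnat /= big_nat_recl //=; congr (_ + _).
case: ifP => _; last by rewrite big1.
by rewrite exchange_big /=; apply: eq_bigr => y _; rewrite mulr_sumr.
Qed.

Lemma exit_within_out m n j T x :
  ~~ (m < x < n)%N -> exit_within m n j T.+1 x = (x == j)%:R.
Proof. by move=> /negbTE x_out; rewrite exit_withinS x_out addr0. Qed.

Section Exit.
Variables (m n j : nat).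
Hypotheses (m_ge1 : (1 <= m)%N) (n_le_j : (n <= j)%N).

Lemma exit_within_in T x : (m < x < n)%N ->
  exit_within m n j T.+1 x = q x * exit_within m n j T x.-1
    + p1 x * exit_within m n j T x.+1 + p2 x * exit_within m n j T x.+2.
Proof.
move=> x_in; have /ltn_eqF x_neq_j : (x < j)%N by lia.
by rewrite exit_withinS x_in x_neq_j add0r sum_trans //; lia.
Qed.

Lemma exit_within_le1 T x : exit_within m n j T x <= 1.
Proof.
elim: T x => [|T IH] x; first by rewrite /exit_within seriesEnat /= big_geq.
have [x_in|x_out] := boolP (m < x < n)%N; last first.
  by rewrite exit_within_out // lern1 leq_b1.
have x_ge2 : (2 <= x)%N by lia.
move: (hq x x_ge2) (hp1 x x_ge2) (hp2 x x_ge2) => q_gt0 p1_ge0 p2_gt0.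
rewrite exit_within_in // -(hsum x x_ge2).
by rewrite !lerD // ler_piMr ?IH // ltW.
Qed.

Lemma exit_within_cvg x : cvgn (exit_within m n j ^~ x).
Proof.
apply: nondecreasing_is_cvgn.
  by apply: nondecreasing_series => t _ _; apply: exitP_ge0.
by exists 1 => _ [T _ <-]; apply: exit_within_le1.
Qed.

Lemma Qhit_out x : ~~ (m < x < n)%N -> Qhit q p1 p2 m n j x = (x == j)%:R.
Proof.
move=> x_out; apply/cvg_lim => //; rewrite -cvg_shiftS.
rewrite (_ : [sequence _]_T = cst (x == j)%:R); first exact: cvg_cst.
by apply/funext => T; exact: exit_within_out.
Qed.

Lemma Qhit_harmonic : harmonic_on m n (Qhit q p1 p2 m n j).
Proof.
move=> x x_in; apply/cvg_lim => //; rewrite -cvg_shiftS.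
rewrite (_ : [sequence _]_T = fun T => q x * exit_within m n j T x.-1
    + p1 x * exit_within m n j T x.+1 + p2 x * exit_within m n j T x.+2).
  by apply: cvgD; [apply: cvgD|]; apply: cvgM;
    exact: cvg_cst || exact: exit_within_cvg.
by apply/funext => T; exact: exit_within_in.
Qed.

End Exit.

Definition increments (h : nat -> R) (s : nat) : 'rV[R]_2 :=
  \row_(i < 2) (h (s + i)%N - h (s + i).-1).

Lemma increments_decomp h s :
  increments h s = (h s - h s.-1) *: e1 + (h s.+1 - h s) *: e2.
Proof.
by apply/rowP => i; rewrite !mxE; case: i => [[|[|]]] //= _; rewrite ?addn0 ?addn1; ring.
Qed.

Lemma e1MvE (M : 'M[R]_2) v : e1Mv M v = (M *m v^T) 0 0.
Proof. by rewrite /e1Mv -mulmxA /e1 -rowE mxE. Qed.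

Lemma e1MvD (M : 'M[R]_2) u v : e1Mv M (u + v) = e1Mv M u + e1Mv M v.
Proof. by rewrite !e1MvE linearD mulmxDr mxE. Qed.

Lemma e1MvZ (M : 'M[R]_2) a v : e1Mv M (a *: v) = a * e1Mv M v.
Proof. by rewrite !e1MvE linearZ -scalemxAr mxE. Qed.

Lemma Aprod_recl s n : (s < n)%N ->
  Aprod q p1 p2 s n = A_ q p1 p2 s *m Aprod q p1 p2 s.+1 n.
Proof. by move=> lt_sn; rewrite /Aprod big_ltn // mulmxE. Qed.

Lemma A_ge0 s : (2 <= s)%N -> forall i j, 0 <= A_ q p1 p2 s i j.
Proof.
move=> s_ge2 i j.
move: (hq s s_ge2) (hp1 s s_ge2) (hp2 s s_ge2) => q_gt0 p1_ge0 p2_gt0.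
by rewrite mxE /a_ /b_; repeat case: ifP => _; rewrite ?divr_ge0 ?addr_ge0 // ltW.
Qed.

Lemma Aprod_ge0 s n : (2 <= s)%N -> forall i j, 0 <= Aprod q p1 p2 s n i j.
Proof.
move=> s_ge2; rewrite /Aprod big_nat_cond.
apply: (big_ind (fun M : 'M[R]_2 => forall i j, 0 <= M i j)).
- by move=> i j; rewrite mxE ler0n.
- by move=> M N M_ge0 N_ge0; rewrite -mulmxE; apply: mulmx_ge0.
- by move=> i /andP[/andP[le_si _] _]; apply: A_ge0; lia.
Qed.

Section Harmonic.
Variables (m n : nat) (h : nat -> R).
Hypotheses (m_ge1 : (1 <= m)%N) (h_harm : harmonic_on m n h).

Lemma increments_recl s : (m < s < n)%N ->
  (increments h s)^T = A_ q p1 p2 s *m (increments h s.+1)^T.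
Proof.
move=> s_in; have s_ge2 : (2 <= s)%N by lia.
have q_neq0 : q s != 0 by rewrite lt0r_neq0 ?hq.
have h_pred : h s.-1 = (h s - p1 s * h s.+1 - p2 s * h s.+2) / q s.
  by rewrite (h_harm s s_in); field.
have p1E : p1 s = 1 - q s - p2 s by rewrite -(hsum s s_ge2); ring.
apply/colP => i; rewrite !mxE !big_ord_recl big_ord0 !mxE /=.
case: i => [[|[|]]] //= _; rewrite /bump /= !addn0 ?addn1 ?addn0.
  by rewrite h_pred /a_ /b_ p1E; field.
by ring.
Qed.

Lemma increments_Aprod s : (m < s <= n)%N ->
  (increments h s)^T = Aprod q p1 p2 s n *m (increments h n)^T.
Proof.
move=> s_in; move Ed: (n - s)%N => d; elim: d s Ed s_in => [|d IH] s Ed s_in.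
  have -> : s = n by lia.
  by rewrite /Aprod big_geq // mul1mx.
rewrite Aprod_recl; last lia.
by rewrite -mulmxA -IH; [apply: increments_recl | | ]; lia.
Qed.

Lemma e1Mv_Aprod_increments s : (m < s <= n)%N ->
  e1Mv (Aprod q p1 p2 s n) (increments h n) = h s - h s.-1.
Proof. by move=> s_in; rewrite e1MvE -increments_Aprod // !mxE addn0. Qed.

Hypothesis h_m : h m = 0.

Lemma harmonic_telescope k : (m <= k <= n)%N ->
  h k = \sum_(m.+1 <= s < k.+1) e1Mv (Aprod q p1 p2 s n) (increments h n).
Proof.
move=> /andP[le_mk le_kn].
rewrite (@eq_big_nat _ _ _ _ _ _ (fun s => h s - h s.-1)) => [|s s_in]; last first.
  by rewrite e1Mv_Aprod_increments //; lia.
by rewrite big_add1 /= telescope_sumr // h_m subr0.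
Qed.

Lemma harmonic_solution k : (m < n)%N -> (m <= k <= n)%N ->
  let S1 := \sum_(m.+1 <= s < n) e1Mv (Aprod q p1 p2 s n) e1 in
  let S2 := \sum_(m.+1 <= s < n) e1Mv (Aprod q p1 p2 s n) e2 in
  h k = \sum_(m.+1 <= s < k.+1) e1Mv (Aprod q p1 p2 s n)
          (((h n - (h n.+1 - h n) * S2) / (1 + S1)) *: e1 + (h n.+1 - h n) *: e2).
Proof.
move=> lt_mn k_in S1 S2.
have S1_ge0 : 0 <= S1.
  rewrite /S1 big_nat_cond; apply: sumr_ge0 => s /andP[/andP[lt_ms _] _].
  apply: mulmx_ge0 => [|i j]; last by rewrite !mxE ler0n.
  by apply: mulmx_ge0 => i j; rewrite ?mxE ?ler0n // Aprod_ge0 //; lia.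
have jump_n : (h n - h n.-1) * (1 + S1) = h n - (h n.+1 - h n) * S2.
  have pred_in : (m <= n.-1 <= n)%N by lia.
  have := harmonic_telescope _ pred_in; rewrite prednK; last lia.
  under eq_bigr do rewrite increments_decomp e1MvD !e1MvZ.
  rewrite big_split /= -!mulr_sumr -/S1 -/S2 => h_pred.
  lra.
rewrite (harmonic_telescope _ k_in); apply: eq_bigr => s _.
by rewrite increments_decomp -jump_n mulfK // lt0r_neq0 // ltr_pwDl.
Qed.

End Harmonic.

End OneTwoWalk.

Theorem lemma1 (R : realType) (q p1 p2 : nat -> R)
  (hq : forall k, (2 <= k)%N -> 0 < q k)
  (hp1 : forall k, (2 <= k)%N -> 0 <= p1 k)
  (hp2 : forall k, (2 <= k)%N -> 0 < p2 k)
  (hsum : forall k, (2 <= k)%N -> q k + p1 k + p2 k = 1)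
  (m k n : nat) (hm : (1 <= m)%N) (hmk : (m < k)%N) (hkn : (k < n)%N) :
  let P s := Aprod q p1 p2 s n in
  let S1 := \sum_(m.+1 <= s < n) e1Mv (P s) e1 in
  let S2 := \sum_(m.+1 <= s < n) e1Mv (P s) e2 in
  [/\ Qhit q p1 p2 m n n k =
        \sum_(m.+1 <= s < k.+1) e1Mv (P s) (((1 + S2) / (1 + S1)) *: e1 - e2),
      Qhit q p1 p2 m n n.+1 k =
        \sum_(m.+1 <= s < k.+1) e1Mv (P s) (e2 - (S2 / (1 + S1)) *: e1)
    & Qplus q p1 p2 m n k =
        (\sum_(m.+1 <= s < k.+1) e1Mv (P s) e1) / (1 + S1)].
Proof.
move=> P S1 S2.
have solution h : harmonic_on q p1 p2 m n h -> h m = 0 ->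
    h k = \sum_(m.+1 <= s < k.+1) e1Mv (P s)
            (((h n - (h n.+1 - h n) * S2) / (1 + S1)) *: e1 + (h n.+1 - h n) *: e2).
  by move=> h_harm h_m; apply: harmonic_solution => //; lia.
have Qhit_harm j : (n <= j)%N -> harmonic_on q p1 p2 m n (Qhit q p1 p2 m n j).
  exact: Qhit_harmonic.
have Qhit_m j : (n <= j)%N -> Qhit q p1 p2 m n j m = 0.
  by move=> le_nj; rewrite Qhit_out ?ltn_eqF //; lia.
have Qhit_n j : Qhit q p1 p2 m n j n = (n == j)%:R by rewrite Qhit_out //; lia.
have Qhit_n1 j : Qhit q p1 p2 m n j n.+1 = (n.+1 == j)%:R by rewrite Qhit_out //; lia.
have neq_n_n1 : (n == n.+1) = false by rewrite ltn_eqF.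
have neq_n1_n : (n.+1 == n) = false by rewrite gtn_eqF.
split.
- rewrite (solution _ (Qhit_harm _ (leqnn n)) (Qhit_m _ (leqnn n))).
  rewrite !Qhit_n !Qhit_n1 eqxx neq_n1_n.
  by apply: eq_bigr => s _; rewrite mulr1n sub0r mulN1r opprK scaleN1r.
- rewrite (solution _ (Qhit_harm _ (leqnSn n)) (Qhit_m _ (leqnSn n))).
  rewrite !Qhit_n !Qhit_n1 eqxx neq_n_n1.
  by apply: eq_bigr => s _; rewrite mulr1n subr0 mul1r sub0r mulNr scaleNr scale1r addrC.
- have Qplus_harm : harmonic_on q p1 p2 m n (Qplus q p1 p2 m n).
    exact: harmonic_onD (Qhit_harm _ (leqnn n)) (Qhit_harm _ (leqnSn n)).
  rewrite (solution _ Qplus_harm); last by rewrite /Qplus !Qhit_m ?addr0.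
  rewrite /Qplus !Qhit_n !Qhit_n1 !eqxx neq_n_n1 neq_n1_n addr0 add0r subrr.
  rewrite mulr_suml; apply: eq_bigr => s _.
  by rewrite scale0r addr0 mul0r subr0 mulr1n e1MvZ mul1r mulrC.
Qed.
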